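(* Let $q = p^{2a}$, let $\mathbb{Z}_q$ be the ring of integers of the unramified extension $\mathbb{Q}_q$ of $\mathbb{Q}_p$ of degree $2a$, let $\sigma$ be the lift of the $p$-power Frobenius to $\mathbb{Z}_q$, and let $\mathfrak{A} = \mathbb{Z}_q[F,V]$ be the Dieudonné ring ($FV = VF = p$, $F\lambda = \lambda^\sigma F$, $V\lambda^\sigma = \lambda V$ for $\lambda\in\mathbb{Z}_q$). Let $M$ be the $\mathfrak{A}$-module free over $\mathbb{Z}_q$ on $x,y$ with $Fx = Vx = y$, $Fy = Vy = px$ (the Dieudonné module of any elliptic curve over $\mathbb{F}_q$ with Weil polynomial $(x-\sqrt q)^2$, $\sqrt q = p^a$). For each $(p^2-1)$-st root of unity $\zeta\in\mathbb{Q}_{p^2}\subseteq\mathbb{Q}_q$, choose a $(q-1)$-st root of unity $\xi\in\mathbb{Q}_q$ with $N_{\mathbb{Q}_q/\mathbb{Q}_{p^2}}(\xi) = \zeta$, and let $M_\zeta$ be the $\mathfrak{A}$-module free over $\mathbb{Z}_q$ on $w,z$ with $Fw = z$, $Fz = \xi^{-1}pw$, $Vw = \xi^{\sigma^{-1}}z$, $Vz = pw$ (its isomorphism class is independent of the choice of $\xi$). Then: (a) the modules $M_\zeta$ are pairwise non-isomorphic as $\mathfrak{A}$-modules; (b) each $M_\zeta$ becomes isomorphic to $M$ after extension of scalars to the ring of integers of the maximal unramified extension of $\mathbb{Q}_q$ (with $F,V$ extended in the same way), i.e. each $M_\zeta$ is an $\overline{\mathbb{F}}_q/\mathbb{F}_q$-twist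 of $M$, and $M_\zeta$ is the twist of $M$ by the automorphism of $M$ given by $x\mapsto\zeta x$, $y\mapsto\zeta^\sigma y$; (c) if $p > 3$, every $\overline{\mathbb{F}}_q/\mathbb{F}_q$-twist of $M$ is isomorphic to some $M_\zeta$.
   Context: A twist of $M$ by an automorphism $u$ (of finite order) of $\overline{M}$ is a module $N$ over $\mathfrak{A}$ together with an isomorphism $\phi\colon\overline{M}\to\overline{N}$ of the base extensions such that $\phi^{-1}\phi^{(q)} = u$, where $\phi^{(q)}$ is the image of $\phi$ under the $q$-power Frobenius of $\overline{\mathbb{F}}_q/\mathbb{F}_q$. The endomorphism ring of $M$ (over both $\mathbb{F}_q$ and $\overline{\mathbb{F}}_q$) is the maximal order of the quaternion division algebra over $\mathbb{Q}_p$. *)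

From HB Require Import structures.
From mathcomp Require Import all_boot all_order all_algebra all_field.
Set Implicit Arguments. Unset Strict Implicit. Unset Printing Implicit Defensive.
Import Order.TTheory GRing.Theory.
Local Open Scope ring_scope.

Definition pdvd (R : idomainType) (p n : nat) (x : R) : Prop :=
  exists y : R, x = (p%:R ^+ n) * y.

(* R is a strict p-ring: p-torsion free, p-adically separated and complete.
   Together with a perfect residue field R/pR = K this characterises R as
   the Witt ring W(K) up to unique isomorphism. *)
Definition strict_p_ring (p : nat) (R : idomainType) : Prop :=
  [/\ forall x : R, p%:R * x = 0 -> x = 0,
      forall x : R, (forall n, pdvd p n x) -> x = 0 &
      forall s : nat -> R, (forall n, pdvd p n (s n.+1 - s n)) ->
        exists x : R, forall n, pdvd p n (x - s n)].

Definition residue_map (p : nat) (R : idomainType) (K : fieldType)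
  (pi : R -> K) : Prop :=
  (forall k : K, exists x : R, pi x = k) /\
  (forall x : R, pi x = 0 <-> pdvd p 1 x).

Definition frob_lift (p : nat) (R : idomainType) (K : fieldType)
  (pi : R -> K) (s : R -> R) : Prop :=
  forall x : R, pi (s x) = pi x ^+ p.

(* A Dieudonne module that is free of rank n over R, in a fixed basis:
   F v = A *m (sigma v), V v = B *m (sigma^-1 v)   (column vectors;
   column j of A is F(e_j), column j of B is V(e_j)).
   The relations FV = VF = p. *)
Definition dieud (p : nat) (R : idomainType) (s si : R -> R) (n : nat)
  (A B : 'M[R]_n) : Prop :=
  A *m map_mx s B = (p%:R)%:M /\ B *m map_mx si A = (p%:R)%:M.

Definition dmod_iso (R : idomainType) (s si : R -> R) (m n : nat)
  (A B : 'M[R]_m) (A' B' : 'M[R]_n) : Prop :=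
  exists (P : 'M[R]_(n, m)) (Q : 'M[R]_(m, n)),
    [/\ P *m Q = 1%:M, Q *m P = 1%:M,
        P *m A = A' *m map_mx s P & P *m B = B' *m map_mx si P].

Definition dmod_aut_fin (R : idomainType) (s si : R -> R) (m : nat)
  (A B : 'M[R]_m) (u : 'M[R]_m) : Prop :=
  [/\ u \in unitmx, u *m A = A *m map_mx s u, u *m B = B *m map_mx si u
    & exists k, (0 < k)%N /\ u ^+ k = 1%:M].

(* Over the big ring S (with Frobenius lift sS, and fr = the lift of the
   q-power Frobenius), the module N = (A',B') is a twist of M = (A,B) by u:
   there is an isomorphism phi : M -> N with phi^-1 phi^(q) = u, where
   phi^(q) is obtained by applying fr to the entries of phi (both M and N
   come from modules defined over the small ring). *)
Definition twist (S : idomainType) (sS sSi fr : S -> S) (m n : nat)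
  (A B : 'M[S]_m) (A' B' : 'M[S]_n) (u : 'M[S]_m) : Prop :=
  exists (phi : 'M[S]_(n, m)) (psi : 'M[S]_(m, n)),
    [/\ phi *m psi = 1%:M, psi *m phi = 1%:M,
        phi *m A = A' *m map_mx sS phi,
        phi *m B = B' *m map_mx sSi phi
      & psi *m map_mx fr phi = u].

Definition mx2 (R : idomainType) (a b c d : R) : 'M[R]_2 :=
  \matrix_(i < 2, j < 2)
     if val i == 0%N then (if val j == 0%N then a else b)
     else (if val j == 0%N then c else d).

(* M: F x = V x = y, F y = V y = p x   (basis x = e_0, y = e_1) *)
Definition MF (p : nat) (R : idomainType) : 'M[R]_2 := mx2 0 p%:R 1 0.
Definition MV (p : nat) (R : idomainType) : 'M[R]_2 := mx2 0 p%:R 1 0.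

(* M_zeta (built from xi): F w = z, F z = xi^-1 p w, V w = xi^(sigma^-1) z,
   V z = p w   (basis w = e_0, z = e_1) *)
Definition MzF (p : nat) (R : idomainType) (xi : R) : 'M[R]_2 :=
  mx2 0 (xi^-1 * p%:R) 1 0.
Definition MzV (p : nat) (R : idomainType) (si : R -> R) (xi : R) : 'M[R]_2 :=
  mx2 0 p%:R (si xi) 0.

(* An F-equivariant map between two modules M_xi has a diagonal entry c with
   sigma^2(c) xi1 = c xi2; iterating a times and reducing mod p, where sigma^(2a) is the
   identity of F_q, gives c (zeta1 - zeta2) = 0 mod p with c a unit, and roots of unity
   of order prime to p are determined by their residues: this is (a). Conversely, Hilbert 90
   for the cyclic group F_q^x (resp. Lang's theorem over the algebraically closed residue
   field) produces a unit T with sigma^2 T = T xi2/xi1 (resp. sigma^2 T = T xi), and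
   diag(T, sigma T) is the isomorphism M_xi1 = M_xi2 (resp. the twisting isomorphism M = M_zeta
   of (b)).
   For (c), an automorphism u of M commutes with F, so it is diag(alpha, sigma alpha) modulo p.
   For p > 3 a binomial expansion shows that u has no p-torsion, so its order is prime to p,
   and averaging u^j D^-j, with D = diag(zeta, sigma zeta) and zeta the Teichmuller lift of
   alpha mod p, conjugates u into D by an automorphism defined over Z_q. Twists by conjugate
   automorphisms are isomorphic, and the isomorphism descends from the big ring to Z_q since
   every element fixed by sigma^(2a) comes from Z_q (successive Teichmuller approximation). *)

From HB Require Import structures.
From mathcomp Require Import all_boot all_order all_algebra all_field all_fingroup all_solvable.
From mathcomp Require Import ring zify.
From Stdlib Require Import ClassicalEpsilon.
Set Implicit Arguments. Unset Strict Implicit. Unset Printing Implicit Defensive.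
Import GRing.Theory.
Local Open Scope ring_scope.

Section PdvdArith.
Variables (p : nat) (R : idomainType).

Lemma pdvd0 (x : R) : pdvd p 0 x.
Proof. by exists x; rewrite expr0 mul1r. Qed.

Lemma pdvd0r n : pdvd p n (0 : R).
Proof. by exists 0; rewrite mulr0. Qed.

Lemma pdvdD n (x y : R) : pdvd p n x -> pdvd p n y -> pdvd p n (x + y).
Proof. by move=> [a ->] [b ->]; exists (a + b); rewrite mulrDr. Qed.

Lemma pdvdN n (x : R) : pdvd p n x -> pdvd p n (- x).
Proof. by move=> [a ->]; exists (- a); rewrite mulrN. Qed.

Lemma pdvdB n (x y : R) : pdvd p n x -> pdvd p n y -> pdvd p n (x - y).
Proof. by move=> hx hy; apply: pdvdD => //; apply: pdvdN. Qed.

Lemma pdvdMl n (x y : R) : pdvd p n x -> pdvd p n (y * x).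
Proof. by move=> [a ->]; exists (y * a); rewrite mulrCA. Qed.

Lemma pdvdM m n (x y : R) : pdvd p m x -> pdvd p n y -> pdvd p (m + n) (x * y).
Proof. by move=> [a ->] [b ->]; exists (a * b); rewrite exprD mulrACA. Qed.

Lemma pdvd_le m n (x : R) : (m <= n)%N -> pdvd p n x -> pdvd p m x.
Proof.
move=> le [a ->]; exists (p%:R ^+ (n - m) * a).
by rewrite mulrA -exprD subnKC.
Qed.

Lemma pdvd_pX n (x : R) : pdvd p n (p%:R ^+ n * x).
Proof. by exists x. Qed.

Lemma pdvd_pXM n m (x : R) : pdvd p m x -> pdvd p (n + m) (p%:R ^+ n * x).
Proof. by move=> [b ->]; exists b; rewrite exprD mulrA. Qed.

End PdvdArith.

Section StrictPRing.
Variables (p : nat) (R : idomainType) (F : fieldType) (pi : {rmorphism R -> F}).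
Hypotheses (pp : prime p) (hR : strict_p_ring p R) (hpi : residue_map p pi).

Lemma pR_neq0 : (p%:R : R) != 0.
Proof.
apply/eqP=> h; case: hR => tf _ _.
have := tf 1; rewrite mulr1 h => /(_ erefl) /eqP; by rewrite oner_eq0.
Qed.

Lemma pRX_neq0 n : (p%:R : R) ^+ n != 0.
Proof. by rewrite expf_neq0 // pR_neq0. Qed.

Lemma pdvd_sep (x y : R) : (forall n, pdvd p n (x - y)) -> x = y.
Proof. by case: hR => _ sep _ h; apply/eqP; rewrite -subr_eq0; apply/eqP/sep. Qed.

Lemma pdvd_limit (s : nat -> R) : (forall n, pdvd p n (s n.+1 - s n)) ->
  exists x, forall n, pdvd p n (x - s n).
Proof. by case: hR => _ _; apply. Qed.

Lemma residue0P (x : R) : pi x = 0 <-> pdvd p 1 x.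
Proof. by case: hpi. Qed.

Lemma residue_eqP (x y : R) : pi x = pi y <-> pdvd p 1 (x - y).
Proof.
rewrite -residue0P rmorphB; split=> [-> | /eqP]; first by rewrite subrr.
by rewrite subr_eq0 => /eqP.
Qed.

Lemma residue_pdvd n (x : R) : (0 < n)%N -> pdvd p n x -> pi x = 0.
Proof. by move=> n0 h; apply/residue0P; apply: pdvd_le h. Qed.

Lemma residue_p : pi p%:R = 0.
Proof. by apply/residue0P; exists 1; rewrite expr1 mulr1. Qed.

Lemma pchar_residue : p \in [pchar F].
Proof. by rewrite inE pp /= -(rmorph_nat pi) residue_p eqxx. Qed.

Lemma residue_sum_geom m (x y : R) : pi x = pi y -> (0 < m)%N ->
  pi (\sum_(i < m) x ^+ (m.-1 - i) * y ^+ i) = m%:R * pi y ^+ m.-1.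
Proof.
move=> exy m0; rewrite rmorph_sum /= (eq_bigr (fun _ => pi y ^+ m.-1)).
  by rewrite sumr_const card_ord mulr_natl.
move=> i _; rewrite rmorphM /= !rmorphXn /= exy -exprD subnK //.
by rewrite -ltnS prednK.
Qed.

(* x = y mod p^(n+1) implies x^p = y^p mod p^(n+2), since x^p - y^p = (x - y) * sum
   and the sum is p * y^(p-1) mod p. *)
Lemma pdvd_subXp n (x y : R) : pdvd p n.+1 (x - y) -> pdvd p n.+2 (x ^+ p - y ^+ p).
Proof.
move=> h; rewrite subrXX.
have exy : pi x = pi y by apply/residue_eqP; apply: pdvd_le h.
have h1 : pdvd p 1 (\sum_(i < p) x ^+ (p.-1 - i) * y ^+ i).
  apply/residue0P; rewrite residue_sum_geom ?prime_gt0 //.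
  by rewrite (pcharf0 pchar_residue) mul0r.
by have := pdvdM h h1; rewrite addn1.
Qed.

Lemma pdvd_subXpX k n (x y : R) :
  pdvd p n.+1 (x - y) -> pdvd p (n.+1 + k) (x ^+ (p ^ k) - y ^+ (p ^ k)).
Proof.
elim: k => [|k IH] h; first by rewrite addn0 expn0 !expr1.
by rewrite expnSr !exprM addnS; apply: pdvd_subXp (IH h).
Qed.

(* 1 - r with r in pR is inverted by the geometric series sum r^i. *)
Lemma residue_neq0_unit (x : R) : pi x != 0 -> x \is a GRing.unit.
Proof.
move=> nz; case: hpi => surj _.
have [t ht] := surj (pi x)^-1.
pose r := 1 - x * t.
have [c rE] : pdvd p 1 r by apply/residue0P; rewrite rmorphB rmorphM /= rmorph1 ht mulfV ?subrr.
have rX n : pdvd p n (r ^+ n) by rewrite rE exprMn -exprM mul1n; apply: pdvd_pX.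
pose s n := \sum_(i < n) r ^+ i.
have [w hw] : exists w, forall n, pdvd p n (w - s n).
  by apply: pdvd_limit => n; rewrite /s big_ord_recr /= addrAC subrr add0r.
have key : (1 - r) * w = 1.
  apply: pdvd_sep => n.
  have -> : (1 - r) * w - 1 = (1 - r) * (w - s n) - r ^+ n.
    have e : (1 - r) * \sum_(i < n) r ^+ i = 1 - r ^+ n.
      by rewrite -opprB mulNr -subrX1 opprB.
    by rewrite mulrBr /s e; ring.
  exact/pdvdB/rX/pdvdMl.
rewrite /r opprB addrC subrK in key.
by apply/unitrP; exists (t * w); rewrite mulrA key mulrC mulrA key.
Qed.

Lemma unity_root_residue_inj m (x y : R) : ~~ (p %| m)%N ->
  x ^+ m = 1 -> y ^+ m = 1 -> pi x = pi y -> x = y.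
Proof.
move=> pm xm ym exy; have m0 : (0 < m)%N by case: m pm {xm ym} => //; rewrite dvdn0.
apply/eqP; rewrite -subr_eq0.
have /eqP := subrr (1 : R); rewrite -{1}xm -ym subrXX mulf_eq0 => /orP[//|/eqP hs].
have /eqP := f_equal pi hs; rewrite residue_sum_geom // rmorph0 mulf_eq0.
rewrite -(dvdn_pcharf pchar_residue) (negbTE pm) /= expf_eq0 => /andP [_ /eqP py0].
have /eqP := f_equal pi ym; rewrite rmorphXn py0 expr0n eqn0Ngt m0 rmorph1 /=.
by rewrite eq_sym oner_eq0.
Qed.

Lemma frob_lift_unity_root (s : {rmorphism R -> R}) m (x : R) :
  frob_lift p pi s -> ~~ (p %| m)%N -> x ^+ m = 1 -> s x = x ^+ p.
Proof.
move=> fl pm xm; apply: (unity_root_residue_inj pm).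
- by rewrite -rmorphXn xm rmorph1.
- by rewrite -exprM mulnC exprM xm expr1n.
- by rewrite fl rmorphXn.
Qed.

Lemma frob_lift_iter (s : {rmorphism R -> R}) n (x : R) : frob_lift p pi s ->
  pi (iter n s x) = pi x ^+ (p ^ n).
Proof.
move=> fl; elim: n => [|n IH]; first by rewrite expn0 expr1.
by rewrite iterS fl IH -exprM expnSr.
Qed.

(* The Teichmuller lift of k is the limit of y^(p^(N n)) for any lift y of k. *)
Lemma teichmuller_lift N (k : F) : (0 < N)%N -> k ^+ (p ^ N) = k ->
  exists T : R, T ^+ (p ^ N) = T /\ pi T = k.
Proof.
move=> N0 kN; case: hpi => surj _; have [y hy] := surj k.
pose s n := y ^+ (p ^ (N * n)).
have sS n : s n ^+ (p ^ N) = s n.+1 by rewrite /s -exprM -expnD mulnS addnC.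
have y1 : pdvd p 1 (y ^+ (p ^ N) - y) by apply/residue_eqP; rewrite rmorphXn /= hy kN.
have [T hT] : exists T, forall n, pdvd p n (T - s n).
  apply: pdvd_limit => n; have := pdvd_subXpX (N * n) y1.
  rewrite /s -!exprM -expnD addnC -mulnS; apply: pdvd_le.
  by rewrite addn1 ltnW // ltnS leq_pmull.
exists T; split.
  apply: pdvd_sep => n; have := pdvd_subXpX N (hT n.+1); rewrite sS => h1.
  have -> : T ^+ (p ^ N) - T = (T ^+ (p ^ N) - s n.+2) - (T - s n.+2) by ring.
  apply: pdvdB; first by apply: pdvd_le h1; lia.
  by apply: pdvd_le (hT n.+2); rewrite ltnW.
have /residue_eqP -> := hT 1%N.
by rewrite /s muln1 rmorphXn /= hy kN.
Qed.

End StrictPRing.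

Lemma finField_unity_root_expP (K : finFieldType) n m (c : K) :
  (n * m)%N = #|K|.-1 -> c ^+ m = 1 -> exists y : K, y ^+ n = c.
Proof.
move=> nm cm; have K1 := finNzRing_gt1 K.
have m0 : (0 < m)%N by case: m nm {cm} => //; rewrite muln0; case: #|K| K1 => [|[]].
have c0 : c != 0.
  apply/eqP => c0; move: cm; rewrite c0 expr0n eqn0Ngt m0 /= => /eqP.
  by rewrite eq_sym oner_eq0.
pose cu := finField_unit c0.
have /cyclicP [g hg] := field_unit_group_cyclic [set: {unit K}]%G.
have /cycleP [k hk] : cu \in <[g]>%g by rewrite -hg inE.
have og : #[g]%g = #|K|.-1 by rewrite /order -hg card_finField_unit.
have cum : (cu ^+ m)%g = 1%g by apply: val_inj; rewrite FinRing.val_unitX /= cm.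
have : (#[g]%g %| k * m)%N by rewrite order_dvdn expgM -hk cum.
rewrite og -nm dvdn_pmul2r // => /dvdnP [j hj].
by exists (FinRing.uval g ^+ j); rewrite -exprM -hj -FinRing.val_unitX -hk.
Qed.

Lemma closed_field_nth_root (L : closedFieldType) n (c : L) : (0 < n)%N ->
  exists y : L, y ^+ n = c.
Proof.
move=> n0; have [y hy] := @solve_monicpoly L n (fun i => if i == 0%N then c else 0) n0.
exists y; rewrite hy (bigD1 (Ordinal n0)) //= big1 ?addr0 ?expr0 ?mulr1 //.
by move=> i /negbTE; rewrite -val_eqE /= => ->; apply: mul0r.
Qed.

Section Mx2.
Variable R : idomainType.

Definition i0 : 'I_2 := ord0.
Definition i1 : 'I_2 := ord_max.

Lemma mx2E00 (a b c d : R) : mx2 a b c d i0 i0 = a. Proof. by rewrite mxE. Qed.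
Lemma mx2E01 (a b c d : R) : mx2 a b c d i0 i1 = b. Proof. by rewrite mxE. Qed.
Lemma mx2E10 (a b c d : R) : mx2 a b c d i1 i0 = c. Proof. by rewrite mxE. Qed.
Lemma mx2E11 (a b c d : R) : mx2 a b c d i1 i1 = d. Proof. by rewrite mxE. Qed.
Definition mx2E := (mx2E00, mx2E01, mx2E10, mx2E11).

Lemma ord2P (i : 'I_2) : i = i0 \/ i = i1.
Proof. by case: i => [[|[|k]] h] //; [left|right]; apply: val_inj. Qed.

Lemma mx2_eta (X : 'M[R]_2) : X = mx2 (X i0 i0) (X i0 i1) (X i1 i0) (X i1 i1).
Proof.
apply/matrixP => i j; rewrite mxE.
by case: (ord2P i) => ->; case: (ord2P j) => ->.
Qed.

Lemma mx2_inj (a b c d a' b' c' d' : R) :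
  mx2 a b c d = mx2 a' b' c' d' -> [/\ a = a', b = b', c = c' & d = d'].
Proof.
move=> h; have e i j : mx2 a b c d i j = mx2 a' b' c' d' i j by rewrite h.
by move: (e i0 i0) (e i0 i1) (e i1 i0) (e i1 i1); rewrite !mx2E.
Qed.

Lemma mulmx2 (a b c d a' b' c' d' : R) :
  mx2 a b c d *m mx2 a' b' c' d' =
  mx2 (a * a' + b * c') (a * b' + b * d') (c * a' + d * c') (c * b' + d * d').
Proof.
apply/matrixP => i j; rewrite mxE big_ord_recr big_ord_recr big_ord0 /= add0r !mxE.
by case: (ord2P i) => ->; case: (ord2P j) => ->.
Qed.

Lemma addmx2 (a b c d a' b' c' d' : R) :
  mx2 a b c d + mx2 a' b' c' d' = mx2 (a + a') (b + b') (c + c') (d + d').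
Proof.
apply/matrixP => i j; rewrite !mxE.
by case: (ord2P i) => ->; case: (ord2P j) => ->.
Qed.

Lemma mx2_scalar (k : R) : (k%:M : 'M[R]_2) = mx2 k 0 0 k.
Proof.
apply/matrixP => i j; rewrite !mxE.
by case: (ord2P i) => ->; case: (ord2P j) => ->.
Qed.

Lemma mx2_1 : (1 : 'M[R]_2) = mx2 1 0 0 1.
Proof. exact: mx2_scalar. Qed.

Lemma mx2_0 : (0 : 'M[R]_2) = mx2 0 0 0 0.
Proof. by rewrite -mx2_scalar raddf0. Qed.

Lemma det_mx2 (a b c d : R) : \det (mx2 a b c d) = a * d - b * c.
Proof.
rewrite (expand_det_row _ i0) big_ord_recr big_ord_recr big_ord0 /= add0r.
by rewrite /cofactor !det_mx11 /= !mxE /= add0n expr0 expr1; ring.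
Qed.

Lemma mx2_diagX (s t : R) j : (mx2 s 0 0 t) ^+ j = mx2 (s ^+ j) 0 0 (t ^+ j).
Proof.
elim: j => [|j IH]; first by rewrite !expr0 mx2_1.
by rewrite exprS IH -mulmxE mulmx2 !(mul0r, mulr0, add0r, addr0) -!exprS.
Qed.

Lemma mx2_diag_mulV (s t : R) : s \is a GRing.unit -> t \is a GRing.unit ->
  mx2 s 0 0 t *m mx2 s^-1 0 0 t^-1 = 1%:M /\ mx2 s^-1 0 0 t^-1 *m mx2 s 0 0 t = 1%:M.
Proof.
by move=> us ut; rewrite !mulmx2 mx2_scalar !(mul0r, mulr0, add0r, addr0) !mulrV ?mulVr.
Qed.

End Mx2.

Lemma map_mx2 (R S : idomainType) (f : R -> S) (a b c d : R) :
  map_mx f (mx2 a b c d) = mx2 (f a) (f b) (f c) (f d).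
Proof.
apply/matrixP => i j; rewrite !mxE.
by case: (ord2P i) => ->; case: (ord2P j) => ->.
Qed.

Lemma map_mx_cancel (R S : Type) (f : R -> S) (g : S -> R) m n :
  cancel f g -> cancel (@map_mx _ _ f m n) (map_mx g).
Proof. by move=> fg X; apply/matrixP => i j; rewrite !mxE fg. Qed.

Lemma mx_lcancel (S : idomainType) m n (A : 'M[S]_n) (X Y : 'M[S]_(n, m)) :
  \det A != 0 -> A *m X = A *m Y -> X = Y.
Proof.
move=> dA /(congr1 (mulmx (\adj A))); rewrite !mulmxA mul_adj_mx !mul_scalar_mx.
by move=> /matrixP e; apply/matrixP => i j; have := e i j; rewrite !mxE => /mulfI; apply.
Qed.

Lemma mx_rcancel (S : idomainType) m n (A : 'M[S]_n) (X Y : 'M[S]_(m, n)) :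
  \det A != 0 -> X *m A = Y *m A -> X = Y.
Proof.
move=> dA /(congr1 (mulmx^~ (\adj A))); rewrite -!mulmxA mul_mx_adj !mul_mx_scalar.
by move=> /matrixP e; apply/matrixP => i j; have := e i j; rewrite !mxE => /mulfI; apply.
Qed.

(* V = c F^-1 is determined by F as soon as F is invertible. *)
Lemma intertwine_V_of_F (S : idomainType) (s : {rmorphism S -> S}) (si : S -> S)
  m n (P : 'M[S]_(n, m)) (A1 B1 : 'M[S]_m) (A2 B2 : 'M[S]_n) (c : S) :
  cancel s si -> cancel si s ->
  A1 *m map_mx s B1 = c%:M -> A2 *m map_mx s B2 = c%:M -> \det A2 != 0 ->
  P *m A1 = A2 *m map_mx s P -> P *m B1 = B2 *m map_mx si P.
Proof.
move=> ssi sis h1 h2 dA hP; apply: (can_inj (map_mx_cancel ssi)).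
rewrite !map_mxM (map_mx_cancel sis); apply: (mx_lcancel dA).
by rewrite !mulmxA -hP -mulmxA h1 h2 mul_mx_scalar mul_scalar_mx.
Qed.

Lemma intertwine_inv (S : comNzRingType) (s : {rmorphism S -> S}) m n
  (phi : 'M[S]_(n, m)) (psi : 'M[S]_(m, n)) (A : 'M[S]_m) (A' : 'M[S]_n) :
  phi *m psi = 1%:M -> psi *m phi = 1%:M ->
  phi *m A = A' *m map_mx s phi -> psi *m A' = A *m map_mx s psi.
Proof.
move=> pq qp h; have e : map_mx s phi *m map_mx s psi = 1%:M by rewrite -map_mxM pq map_mx1.
by rewrite -[LHS]mulmx1 -e mulmxA -(mulmxA psi) -h mulmxA qp mul1mx.
Qed.

Lemma diag_dmod_iso_mx (R : idomainType) (s : {rmorphism R -> R}) (si : R -> R)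
  (T b b' c : R) (B B' : 'M[R]_2) :
  cancel s si -> cancel si s -> T \is a GRing.unit -> b' != 0 ->
  mx2 0 b 1 0 *m map_mx s B = c%:M -> mx2 0 b' 1 0 *m map_mx s B' = c%:M ->
  T * b = b' * s (s T) ->
  let P := mx2 T 0 0 (s T) in let Q := mx2 T^-1 0 0 (s T)^-1 in
  [/\ P *m Q = 1%:M, Q *m P = 1%:M, P *m mx2 0 b 1 0 = mx2 0 b' 1 0 *m map_mx s P
    & P *m B = B' *m map_mx si P].
Proof.
move=> ssi sis uT b'0 hB hB' hT P Q.
have [PQ QP] := mx2_diag_mulV uT (rmorph_unit s uT).
have hF : P *m mx2 0 b 1 0 = mx2 0 b' 1 0 *m map_mx s P.
  by rewrite map_mx2 !mulmx2 rmorph0 !(mul0r, mulr0, add0r, addr0, mul1r, mulr1) hT.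
split=> //; apply: (intertwine_V_of_F ssi sis hB hB' _ hF).
by rewrite det_mx2 mul0r mulr1 sub0r oppr_eq0.
Qed.

Section PdvdMx2.
Variables (p : nat) (S : idomainType) (L : fieldType) (piS : {rmorphism S -> L}).
Hypotheses (pp : prime p) (hS : strict_p_ring p S) (hpiS : residue_map p piS).

Definition pdvd_mx2 (k00 k01 k10 k11 : nat) (X : 'M[S]_2) :=
  [/\ pdvd p k00 (X i0 i0), pdvd p k01 (X i0 i1), pdvd p k10 (X i1 i0)
    & pdvd p k11 (X i1 i1)].

Lemma pdvd_mx2M a00 a01 a10 a11 b00 b01 b10 b11 c00 c01 c10 c11 (X Y : 'M[S]_2) :
  pdvd_mx2 a00 a01 a10 a11 X -> pdvd_mx2 b00 b01 b10 b11 Y ->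
  (c00 <= a00 + b00)%N -> (c00 <= a01 + b10)%N ->
  (c01 <= a00 + b01)%N -> (c01 <= a01 + b11)%N ->
  (c10 <= a10 + b00)%N -> (c10 <= a11 + b10)%N ->
  (c11 <= a10 + b01)%N -> (c11 <= a11 + b11)%N ->
  pdvd_mx2 c00 c01 c10 c11 (X *m Y).
Proof.
rewrite (mx2_eta X) (mx2_eta Y) /pdvd_mx2 mulmx2 !mx2E.
move=> [x1 x2 x3 x4] [y1 y2 y3 y4] l1 l2 l3 l4 l5 l6 l7 l8; split; apply: pdvdD.
- exact: pdvd_le l1 (pdvdM x1 y1).
- exact: pdvd_le l2 (pdvdM x2 y3).
- exact: pdvd_le l3 (pdvdM x1 y2).
- exact: pdvd_le l4 (pdvdM x2 y4).
- exact: pdvd_le l5 (pdvdM x3 y1).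
- exact: pdvd_le l6 (pdvdM x4 y3).
- exact: pdvd_le l7 (pdvdM x3 y2).
- exact: pdvd_le l8 (pdvdM x4 y4).
Qed.

Lemma pdvd_mx2_sum k00 k01 k10 k11 n (F : 'I_n -> 'M[S]_2) :
  (forall i, pdvd_mx2 k00 k01 k10 k11 (F i)) ->
  pdvd_mx2 k00 k01 k10 k11 (\sum_(i < n) F i).
Proof.
move=> h; elim/big_ind: _ => //.
  by rewrite mx2_0 /pdvd_mx2 !mx2E; split; apply: pdvd0r.
move=> X Y; rewrite (mx2_eta X) (mx2_eta Y) addmx2 /pdvd_mx2 !mx2E.
by move=> [? ? ? ?] [? ? ? ?]; split; apply: pdvdD.
Qed.

Lemma pdvd_mx2_muln k00 k01 k10 k11 (X : 'M[S]_2) c :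
  pdvd_mx2 k00 k01 k10 k11 X -> (p %| c)%N ->
  pdvd_mx2 k00.+1 k01.+1 k10.+1 k11.+1 (X *+ c).
Proof.
have aux k (y : S) d : pdvd p k y -> pdvd p k.+1 (y *+ (d * p)).
  by move=> [w ->]; exists (d%:R * w); rewrite -[LHS]mulr_natl natrM exprS; ring.
by move=> [h1 h2 h3 h4] /dvdnP [d ->]; split; rewrite mulmxnE; apply: aux.
Qed.

Lemma pdvd_mx2_residueM (X Y : 'M[S]_2) : pdvd_mx2 0 1 0 0 X -> pdvd_mx2 0 1 0 0 Y ->
  [/\ pdvd_mx2 0 1 0 0 (X *m Y),
      piS ((X *m Y) i0 i0) = piS (X i0 i0) * piS (Y i0 i0) &
      piS ((X *m Y) i1 i1) = piS (X i1 i1) * piS (Y i1 i1)].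
Proof.
move=> hX hY; split; first exact: (pdvd_mx2M hX hY).
  move: hX hY; rewrite (mx2_eta X) (mx2_eta Y) /pdvd_mx2 mulmx2 !mx2E => [[_ x2 _ _] [_ y2 _ _]].
  by rewrite rmorphD !rmorphM /= (residue_pdvd hpiS _ x2) // mul0r addr0.
move: hX hY; rewrite (mx2_eta X) (mx2_eta Y) /pdvd_mx2 mulmx2 !mx2E => [[_ x2 _ _] [_ y2 _ _]].
by rewrite rmorphD !rmorphM /= (residue_pdvd hpiS _ y2) // mulr0 add0r.
Qed.

Lemma pdvd_mx2_residueX (X : 'M[S]_2) n : pdvd_mx2 0 1 0 0 X ->
  [/\ pdvd_mx2 0 1 0 0 (X ^+ n), piS ((X ^+ n) i0 i0) = piS (X i0 i0) ^+ n
    & piS ((X ^+ n) i1 i1) = piS (X i1 i1) ^+ n].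
Proof.
move=> hX; elim: n => [|n [IH e0 e1]].
  rewrite expr0 mx2_1 /pdvd_mx2 !mx2E rmorph1; split=> //.
  by split; first [apply: pdvd0 | apply: pdvd0r].
rewrite exprSr; have [h -> ->] := pdvd_mx2_residueM IH hX.
by rewrite e0 e1 !exprSr; split.
Qed.

Lemma pchar_unity_root_p (y : L) : y ^+ p = 1 -> y = 1.
Proof.
have cF := pchar_residue pp hpiS.
move=> yp; apply/eqP; rewrite -subr_eq0; apply/eqP.
have : (y - 1) ^+ p = 0.
  rewrite -(pFrobenius_autE cF) pFrobenius_autB_comm ?pFrobenius_autE ?yp ?expr1n ?subrr //.
  exact: commr1.
by move/eqP; rewrite expf_eq0 => /andP [_ /eqP].
Qed.

Lemma pdvd_mx2_unipotent (w : 'M[S]_2) : pdvd_mx2 0 1 0 0 w -> w ^+ p = 1 ->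
  pdvd_mx2 1 1 0 1 (w - 1).
Proof.
move=> hw wp; have [_ e0 e1] := pdvd_mx2_residueX p hw.
rewrite wp mx2_1 !mx2E rmorph1 in e0 e1.
have w00 := pchar_unity_root_p (esym e0); have w11 := pchar_unity_root_p (esym e1).
case: hw => _ h2 _ _; split; rewrite !mxE /= ?subr0 //; try apply: pdvd0.
- by apply/(residue_eqP hpiS); rewrite w00 rmorph1.
- by apply/(residue_eqP hpiS); rewrite w11 rmorph1.
Qed.

Lemma pdvd_mx2_unipotentXS (x : 'M[S]_2) k : pdvd_mx2 1 1 0 1 x ->
  pdvd_mx2 1 1 0 1 (x ^+ k.+1).
Proof.
move=> hx; elim: k => [|k IH]; first by rewrite expr1.
by rewrite exprSr; apply: (pdvd_mx2M IH hx).
Qed.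

Lemma pdvd_mx2_unipotentX (x : 'M[S]_2) k : pdvd_mx2 1 1 0 1 x -> (4 <= k)%N ->
  pdvd_mx2 2 2 1 2 (x ^+ k).
Proof.
move=> hx /subnK <-; elim: (k - 4)%N => [|j IH].
  have x2 : pdvd_mx2 1 2 1 1 (x ^+ 2) by rewrite expr2; apply: (pdvd_mx2M hx hx).
  by rewrite add0n (exprM x 2 2) expr2; apply: (pdvd_mx2M x2 x2).
by rewrite addSn exprSr; apply: (pdvd_mx2M IH hx).
Qed.

Lemma det_p_add_pdvd_mx2 (E : 'M[S]_2) : pdvd_mx2 2 2 1 2 E -> \det ((p%:R)%:M + E) != 0.
Proof.
rewrite (mx2_eta E) mx2_scalar addmx2 det_mx2 !add0r /pdvd_mx2 !mx2E.
case=> [[e00 ->] [e01 ->] [e10 ->] [e11 ->]].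
have -> : (p%:R + p%:R ^+ 2 * e00) * (p%:R + p%:R ^+ 2 * e11) -
    p%:R ^+ 2 * e01 * (p%:R ^+ 1 * e10) =
    p%:R ^+ 2 * ((1 + p%:R * e00) * (1 + p%:R * e11) - p%:R * (e01 * e10)) :> S by ring.
rewrite mulf_neq0 ?pRX_neq0 //; apply/eqP => /(congr1 piS).
rewrite rmorph0 rmorphB rmorphM /= !rmorphD !rmorphM /= rmorph1 (residue_p hpiS).
by rewrite !mul0r !addr0 subr0 mulr1 => /eqP; rewrite oner_eq0.
Qed.

(* (1 + x)^p = 1 gives x T = 0 with T = p + sum_(1 <= j < p) C(p, j+1) x^j. Off the (1,0)
   entry every term of the sum is divisible by p^2: C(p, j+1) is divisible by p for j < p-1,
   and x^(p-1) is because p - 1 >= 4. Hence det T = p^2 * unit, and x = 0. *)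
Lemma pdvd_mx2_p_torsion (w : 'M[S]_2) : (4 < p)%N -> pdvd_mx2 0 1 0 0 w -> w ^+ p = 1 ->
  w = 1.
Proof.
move=> p4 hw wp; have hx := pdvd_mx2_unipotent hw wp.
set x := w - 1 in hx; have wx : w = x + 1 by rewrite /x subrK.
have hsum : \sum_(i < p) x ^+ i.+1 *+ 'C(p, i.+1) = 0.
  move: wp; rewrite wx exprD1n big_ord_recl /= expr0 bin0 mulr1n => /eqP.
  by rewrite addrC -subr_eq0 addrK => /eqP.
pose E := \sum_(i < p.-1) x ^+ i.+1 *+ 'C(p, i.+2).
have xT : x *m ((p%:R)%:M + E) = 0.
  rewrite -hsum -(prednK (prime_gt0 pp)) big_ord_recl /= bin1 prednK ?prime_gt0 //.
  rewrite mulmxDr mul_mx_scalar -mulr_natl; congr (_ + _).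
    by rewrite mulr1 scaler_nat expr1.
  rewrite /E mulmx_sumr; apply: eq_bigr => i _.
  by rewrite /bump leq0n add1n mulmxE mulrnAr -exprS.
have hE : pdvd_mx2 2 2 1 2 E.
  apply: pdvd_mx2_sum => i; have ip := ltn_ord i.
  have [lt | eq] : (i.+2 < p)%N \/ (i.+2 = p)%N by lia.
    by apply: pdvd_mx2_muln (pdvd_mx2_unipotentXS _ hx) _; apply: prime_dvd_bin => //; lia.
  by rewrite eq binn mulr1n; apply: pdvd_mx2_unipotentX => //; lia.
rewrite wx (_ : x = 0) ?add0r //.
by apply: (mx_rcancel (det_p_add_pdvd_mx2 hE)); rewrite xT mul0mx.
Qed.

End PdvdMx2.

Section IterRMorph.
Variables (R : comNzRingType) (f : {rmorphism R -> R}).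

Lemma iter_rmorphD n (x y : R) : iter n f (x + y) = iter n f x + iter n f y.
Proof. by elim: n => //= n ->; rewrite rmorphD. Qed.

Lemma iter_rmorphB n (x y : R) : iter n f (x - y) = iter n f x - iter n f y.
Proof. by elim: n => //= n ->; rewrite rmorphB. Qed.

Lemma iter_rmorphM n (x y : R) : iter n f (x * y) = iter n f x * iter n f y.
Proof. by elim: n => //= n ->; rewrite rmorphM. Qed.

Lemma iter_rmorph0 n : iter n f 0 = 0.
Proof. by elim: n => //= n ->; rewrite rmorph0. Qed.

Lemma iter_rmorph1 n : iter n f 1 = 1.
Proof. by elim: n => //= n ->; rewrite rmorph1. Qed.

Lemma iter_rmorph_nat n k : iter n f k%:R = k%:R.
Proof. by elim: n => //= n ->; rewrite rmorph_nat. Qed.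

Lemma iter_rmorphXn n k (x : R) : iter n f (x ^+ k) = iter n f x ^+ k.
Proof. by elim: n => //= n ->; rewrite rmorphXn. Qed.

Lemma map_mx_iterM n m k l (X : 'M[R]_(m, k)) (Y : 'M[R]_(k, l)) :
  map_mx (iter n f) (X *m Y) = map_mx (iter n f) X *m map_mx (iter n f) Y.
Proof.
elim: n => [|n IH]; first by rewrite !map_mx_id.
have mS m' k' (Z : 'M[R]_(m', k')) : map_mx (iter n.+1 f) Z = map_mx f (map_mx (iter n f) Z).
  by apply/matrixP => i j; rewrite !mxE.
by rewrite !mS IH map_mxM.
Qed.

Lemma map_mx_iter1 n m : map_mx (iter n f) (1%:M : 'M[R]_m) = 1%:M.
Proof.
elim: n => [|n IH]; first by rewrite map_mx_id.
have -> : map_mx (iter n.+1 f) (1%:M : 'M[R]_m) = map_mx f (map_mx (iter n f) 1%:M).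
  by apply/matrixP => i j; rewrite !mxE.
by rewrite IH map_mx1.
Qed.

Lemma map_mx_iter_twist n m k (phi : 'M[R]_(m, k)) (psi : 'M[R]_(k, m)) (u : 'M[R]_k) :
  phi *m psi = 1%:M -> psi *m phi = 1%:M -> psi *m map_mx (iter n f) phi = u ->
  map_mx (iter n f) phi = phi *m u /\ u *m map_mx (iter n f) psi = psi.
Proof.
move=> pq qp <-; split; first by rewrite mulmxA pq mul1mx.
have e : map_mx (iter n f) phi *m map_mx (iter n f) psi = 1%:M.
  by rewrite -map_mx_iterM pq map_mx_iter1.
by rewrite -(mulmxA psi) e mulmx1.
Qed.

Lemma iter2_norm_cocycle (c x y : R) j : f (f c) * x = c * y ->
  iter (2 * j) f c * \prod_(i < j) iter (2 * i) f x = c * \prod_(i < j) iter (2 * i) f y.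
Proof.
move=> h; elim: j => [|j IH]; first by rewrite !big_ord0.
have -> : iter (2 * j.+1) f c = iter (2 * j) f (f (f c)) by rewrite mulnS -!iterSr.
rewrite !big_ord_recr /= mulrA (mulrC (iter _ f (f (f c)))) -mulrA -iter_rmorphM h iter_rmorphM.
by rewrite mulrA (mulrC (\prod_(i < j) _)) IH mulrA.
Qed.

End IterRMorph.

Lemma unity_root_unit (T : unitRingType) m (x : T) : (0 < m)%N -> x ^+ m = 1 ->
  x \is a GRing.unit.
Proof.
move=> m0 h; apply/unitrP; exists (x ^+ m.-1).
by rewrite -exprSr -exprS prednK.
Qed.

Lemma unit_neq0 (T : unitRingType) (x : T) : x \is a GRing.unit -> x != 0.
Proof. by apply: contraTneq => ->; rewrite unitr0. Qed.

Lemma expr_pred_fixed (T : idomainType) m (x : T) : (0 < m)%N -> x != 0 ->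
  x ^+ m = x -> x ^+ m.-1 = 1.
Proof. by move=> m0 x0 h; apply: (mulfI x0); rewrite mulr1 -exprS prednK. Qed.

Section PrimeNat.
Variable p : nat.
Hypothesis pp : prime p.

Lemma ndvd_predX k : (0 < k)%N -> ~~ (p %| (p ^ k).-1)%N.
Proof.
move=> k0; apply/negP => h.
have hk : (p %| p ^ k)%N by rewrite dvdn_exp.
have : (p %| (p ^ k).-1 + 1)%N by rewrite addn1 prednK ?expn_gt0 ?prime_gt0.
rewrite dvdn_addr // dvdn1 => /eqP p1.
by move: pp; rewrite p1.
Qed.

Lemma predX_gt0 k : (0 < k)%N -> (0 < (p ^ k).-1)%N.
Proof. by move=> k0; rewrite -ltnS prednK ?expn_gt0 ?prime_gt0 // -{1}(expn0 p) ltn_exp2l ?prime_gt1. Qed.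

(* exponent of the norm from F_(p^(2a)) down to F_(p^2) *)
Definition norm_exp a := (\sum_(i < a) p ^ (2 * i))%N.

Lemma predXp2_norm_exp a : ((p ^ 2).-1 * norm_exp a)%N = (p ^ (2 * a)).-1.
Proof.
rewrite /norm_exp; elim: a => [|k IH]; first by rewrite big_ord0 muln0 muln0 expn0.
rewrite big_ord_recr /= mulnDr IH mulnS expnD.
have h1 : (1 <= p ^ (2 * k))%N by rewrite expn_gt0 prime_gt0.
have h2 : (1 <= p ^ 2)%N by rewrite expn_gt0 prime_gt0.
move: h1 h2; set X := (p ^ (2 * k))%N; set Y := (p ^ 2)%N => h1 h2.
by rewrite addnC -!subn1; nia.
Qed.

End PrimeNat.

Section ClosedResidue.
Variables (p : nat) (S : idomainType) (L : closedFieldType) (piS : {rmorphism S -> L})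
  (sgS : {rmorphism S -> S}).
Hypotheses (pp : prime p) (hS : strict_p_ring p S) (hpiS : residue_map p piS)
  (flS : frob_lift p piS sgS).

(* Lang's theorem for a root of unity y: take T the Teichmuller lift of a
   (p^2-1)-st root of the residue of y, so that sigma^2 T = T^(p^2) = T y. *)
Lemma sigma2_twist_root m (y : S) : ~~ (p %| m)%N -> y ^+ m = 1 ->
  exists2 T : S, T \is a GRing.unit & sgS (sgS T) = T * y.
Proof.
move=> pm ym; have m0 : (0 < m)%N by case: m pm ym => //; rewrite dvdn0.
have p21 := predX_gt0 pp (isT : (0 < 2)%N).
have [ab hab] := closed_field_nth_root (piS y) p21.
set M := ((p ^ 2).-1 * m)%N.
have cpM : coprime p M by rewrite prime_coprime // Euclid_dvdM // negb_or ndvd_predX.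
set N := totient M.
have N0 : (0 < N)%N by rewrite totient_gt0 muln_gt0 p21.
have MpN : (M %| (p ^ N).-1)%N.
  by rewrite -subn1 -eqn_mod_dvd ?expn_gt0 ?prime_gt0 // Euler_exp_totient.
have abM : ab ^+ M = 1 by rewrite exprM hab -rmorphXn ym rmorph1.
have abN : ab ^+ (p ^ N) = ab.
  have [k hk] := dvdnP MpN; have pN1 : (0 < p ^ N)%N by rewrite expn_gt0 prime_gt0.
  by rewrite -(prednK pN1) exprS hk mulnC exprM abM expr1n mulr1.
have [T [TN piT]] := teichmuller_lift pp hS hpiS N0 abN.
have T0 : T != 0.
  apply/eqP => T0; move: (rmorph_unit piS (unity_root_unit m0 ym)).
  by rewrite unitfE -hab -piT T0 rmorph0 expr0n eqn0Ngt p21 eqxx.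
have ndN := ndvd_predX pp N0.
have TN1 : T ^+ (p ^ N).-1 = 1 by rewrite expr_pred_fixed // expn_gt0 prime_gt0.
have sT : sgS T = T ^+ p := frob_lift_unity_root pp hpiS flS ndN TN1.
exists T; first exact: unity_root_unit (predX_gt0 pp N0) TN1.
have hy : T ^+ (p ^ 2).-1 = y.
  apply: (unity_root_residue_inj pp hpiS ndN).
  - by rewrite -exprM mulnC exprM TN1 expr1n.
  - by have [k ->] := dvdnP MpN; rewrite /M mulnA mulnC exprM ym expr1n.
  by rewrite rmorphXn /= piT hab.
by rewrite sT rmorphXn /= sT -exprM mulnn -hy -exprS prednK ?expn_gt0 ?prime_gt0.
Qed.

End ClosedResidue.

Section DieudonneTwists.
Variables (p a : nat)
  (R S : idomainType) (K : finFieldType) (L : closedFieldType)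
  (piR : {rmorphism R -> K}) (piS : {rmorphism S -> L})
  (sg : {rmorphism R -> R}) (sgi : R -> R)
  (sgS : {rmorphism S -> S}) (sgSi : S -> S)
  (iota : {rmorphism R -> S}).
Hypotheses (pp : prime p) (a0 : (0 < a)%N) (cardK : #|K| = (p ^ (2 * a))%N)
  (hR : strict_p_ring p R) (hpiR : residue_map p piR)
  (hS : strict_p_ring p S) (hpiS : residue_map p piS)
  (sg1 : cancel sg sgi) (sg2 : cancel sgi sg) (flR : frob_lift p piR sg)
  (sgS1 : cancel sgS sgSi) (sgS2 : cancel sgSi sgS) (flS : frob_lift p piS sgS)
  (sgS_iota : forall x : R, sgS (iota x) = iota (sg x)).

Local Notation q := (p ^ (2 * a))%N.
Local Notation nexp := (norm_exp p a).

Definition admissible (zeta xi : R) :=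
  [/\ zeta ^+ (p ^ 2).-1 = 1, xi ^+ q.-1 = 1
    & \prod_(i < a) iter (2 * i) sg xi = zeta].

Lemma a2_gt0 : (0 < 2 * a)%N. Proof. by rewrite muln_gt0 a0. Qed.
Lemma predq_gt0 : (0 < q.-1)%N. Proof. exact: predX_gt0 a2_gt0. Qed.
Lemma q_gt0 : (0 < q)%N. Proof. by rewrite expn_gt0 prime_gt0. Qed.
Lemma q_ndvd : ~~ (p %| q.-1)%N. Proof. exact: ndvd_predX a2_gt0. Qed.
Lemma predp2_gt0 : (0 < (p ^ 2).-1)%N. Proof. exact: predX_gt0. Qed.
Lemma p2_ndvd : ~~ (p %| (p ^ 2).-1)%N. Proof. exact: ndvd_predX. Qed.

Lemma norm_exp_gt0 : (0 < nexp)%N.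
Proof. by move: predq_gt0; rewrite -predXp2_norm_exp // muln_gt0 => /andP []. Qed.

Lemma residue_q (k : K) : k ^+ q = k.
Proof. by rewrite -cardK expf_card. Qed.

Lemma unity_root_iter m n (x : R) : ~~ (p %| m)%N -> x ^+ m = 1 ->
  iter n sg x = x ^+ (p ^ n).
Proof.
move=> pm xm; elim: n => [|n IH]; first by rewrite expn0 expr1.
by rewrite iterS IH rmorphXn /= (frob_lift_unity_root pp hpiR flR pm xm) -exprM expnSr mulnC.
Qed.

Lemma unity_root_fixed (T : R) : T ^+ q = T -> iter (2 * a) sg T = T.
Proof.
move=> hT; have [->|T0] := eqVneq T 0; first by rewrite iter_rmorph0.
by rewrite (unity_root_iter _ q_ndvd (expr_pred_fixed q_gt0 T0 hT)).
Qed.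

Lemma residue_norm (x : R) : piR (\prod_(i < a) iter (2 * i) sg x) = piR x ^+ nexp.
Proof.
rewrite /norm_exp; elim: a => [|k IH]; first by rewrite !big_ord0 rmorph1 expr0.
by rewrite !big_ord_recr /= rmorphM IH (frob_lift_iter _ _ flR) exprD.
Qed.

Lemma norm_unity_root (x : R) : x ^+ q.-1 = 1 -> \prod_(i < a) iter (2 * i) sg x = x ^+ nexp.
Proof.
move=> xq; rewrite /norm_exp; elim: a => [|k IH]; first by rewrite !big_ord0 expr0.
by rewrite !big_ord_recr /= IH (unity_root_iter _ q_ndvd xq) exprD.
Qed.

Lemma teichmuller_q (k : K) : k != 0 ->
  exists T : R, [/\ T ^+ q.-1 = 1, T \is a GRing.unit & piR T = k].
Proof.
move=> k0; have [T [Tq piT]] := teichmuller_lift pp hR hpiR a2_gt0 (residue_q k).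
have T0 : T != 0 by apply: contra_neq k0 => T0; rewrite -piT T0 rmorph0.
have Tq1 := expr_pred_fixed q_gt0 T0 Tq.
by exists T; split=> //; apply: unity_root_unit predq_gt0 Tq1.
Qed.

(* Hilbert 90 for roots of unity: y = T^(p^2 - 1) = T^-1 sigma^2 T, where the residue
   of T is a (p^2-1)-st root of that of y in the cyclic group K^x. *)
Lemma sigma2_twist_root_norm1 (y : R) : y ^+ q.-1 = 1 -> piR y ^+ nexp = 1 ->
  exists2 T : R, T \is a GRing.unit & sg (sg T) = T * y.
Proof.
move=> yq ye.
have nm : ((p ^ 2).-1 * nexp)%N = #|K|.-1 by rewrite predXp2_norm_exp // cardK.
have [ab hab] := finField_unity_root_expP nm ye.
have ab0 : ab != 0.
  apply: contraTneq (rmorph_unit piR (unity_root_unit predq_gt0 yq)) => ab0.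
  by rewrite unitfE negbK -hab ab0 expr0n eqn0Ngt predp2_gt0.
have [T [Tq1 uT piT]] := teichmuller_q ab0.
exists T => //.
have sT : sg (sg T) = T ^+ (p ^ 2) by rewrite -(unity_root_iter 2 q_ndvd Tq1).
have -> : y = T ^+ (p ^ 2).-1.
  apply: (unity_root_residue_inj pp hpiR q_ndvd) => //.
  - by rewrite -exprM mulnC exprM Tq1 expr1n.
  by rewrite rmorphXn /= piT hab.
by rewrite sT -exprS prednK ?expn_gt0 ?prime_gt0.
Qed.

Lemma MzF_MzV (x : R) : x \is a GRing.unit ->
  MzF p x *m map_mx sg (MzV p sgi x) = (p%:R)%:M.
Proof.
move=> ux; rewrite /MzF /MzV map_mx2 mulmx2 mx2_scalar rmorph0 rmorph_nat sg2.
by rewrite !(mul0r, mulr0, add0r, addr0, mul1r, mulr1) mulrAC mulVr ?mul1r.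
Qed.

Lemma MF_MV : MF p R *m map_mx sg (MV p R) = (p%:R)%:M.
Proof.
rewrite /MF /MV map_mx2 mulmx2 mx2_scalar rmorph0 rmorph_nat rmorph1.
by rewrite !(mul0r, mulr0, add0r, addr0, mul1r, mulr1).
Qed.

Lemma Mz_not_iso z1 x1 z2 x2 : admissible z1 x1 -> admissible z2 x2 -> z1 != z2 ->
  ~ dmod_iso sg sgi (MzF p x1) (MzV p sgi x1) (MzF p x2) (MzV p sgi x2).
Proof.
move=> [z1r x1r n1] [z2r x2r n2] z12 [P [Q [PQ _ hF _]]].
move: hF; rewrite (mx2_eta P) /MzF map_mx2 !mulmx2 => /mx2_inj [e1 e2 e3 e4].
rewrite !(mul0r, mulr0, add0r, addr0, mul1r, mulr1) in e1 e2 e3 e4.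
set c := P i0 i0 in e2 e3 *.
have [u1 u2] := (unity_root_unit predq_gt0 x1r, unity_root_unit predq_gt0 x2r).
have key : sg (sg c) * x1 = c * x2.
  move: e2; rewrite e3 => /(congr1 (fun t => t * (x1 * x2))).
  rewrite (_ : c * (x1^-1 * p%:R) * (x1 * x2) = c * x2 * p%:R * (x1^-1 * x1)); last by ring.
  rewrite (_ : x2^-1 * p%:R * sg (sg c) * (x1 * x2) = sg (sg c) * x1 * p%:R * (x2^-1 * x2)).
    by rewrite !mulVr // !mulr1 => /(mulIf (pR_neq0 hR)).
  by ring.
have /(congr1 piR) := iter2_norm_cocycle a key.
rewrite n1 n2 !rmorphM /= (frob_lift_iter _ _ flR) residue_q => /eqP.
rewrite -subr_eq0 -mulrBr mulf_eq0 subr_eq0 => /orP [/eqP c0 | /eqP e].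
  have pid : piR (P i1 i1) = 0 by rewrite e3 flR c0 expr0n eqn0Ngt prime_gt0.
  have pib : piR (P i0 i1) = 0 by rewrite e1 !rmorphM /= (residue_p hpiR) mulr0 mul0r.
  have /(congr1 piR) := congr1 determinant PQ.
  rewrite det_mulmx det1 rmorphM rmorph1 {1}(mx2_eta P) det_mx2 rmorphB !rmorphM /=.
  by rewrite pid pib !mul0r mulr0 subrr mul0r => /eqP; rewrite eq_sym oner_eq0.
by move/negP: z12; apply; apply/eqP; apply: (unity_root_residue_inj pp hpiR p2_ndvd).
Qed.

Lemma Mz_iso_indep z x1 x2 : admissible z x1 -> admissible z x2 ->
  dmod_iso sg sgi (MzF p x1) (MzV p sgi x1) (MzF p x2) (MzV p sgi x2).
Proof.
move=> [zr x1r n1] [_ x2r n2].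
have [u1 u2] := (unity_root_unit predq_gt0 x1r, unity_root_unit predq_gt0 x2r).
have [T uT hT] : exists2 T, T \is a GRing.unit & sg (sg T) = T * (x2 / x1).
  apply: sigma2_twist_root_norm1; first by rewrite exprMn exprVn x1r x2r invr1 mulr1.
  rewrite rmorphM rmorphV //= exprMn exprVn -!residue_norm n1 n2 mulfV //.
  by rewrite -unitfE rmorph_unit // (unity_root_unit predp2_gt0 zr).
have b'0 : x2^-1 * p%:R != 0 by rewrite mulf_neq0 ?(pR_neq0 hR) // unit_neq0 // unitrV.
have hT' : T * (x1^-1 * p%:R) = x2^-1 * p%:R * sg (sg T).
  rewrite hT [RHS](_ : _ = T * (x1^-1 * p%:R) * (x2^-1 * x2)); last by ring.
  by rewrite mulVr // mulr1.
have := diag_dmod_iso_mx sg1 sg2 uT b'0 (MzF_MzV u1) (MzF_MzV u2) hT'.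
by exists (mx2 T 0 0 (sg T)), (mx2 T^-1 0 0 (sg T)^-1).
Qed.

Lemma iter_sgS_iota n (x : R) : iter n sgS (iota x) = iota (iter n sg x).
Proof. by elim: n => //= n ->; rewrite sgS_iota. Qed.

Lemma map_mx_sgS_iota m n (X : 'M[R]_(m, n)) :
  map_mx sgS (map_mx iota X) = map_mx iota (map_mx sg X).
Proof. by apply/matrixP => i j; rewrite !mxE. Qed.

Local Notation MbF := (map_mx iota (MF p R)).
Local Notation MbV := (map_mx iota (MV p R)).

Lemma MbFE : MbF = mx2 0 p%:R 1 0.
Proof. by rewrite /MF map_mx2 rmorph0 rmorph1 rmorph_nat. Qed.

Lemma Mz_twist z x : admissible z x ->
  twist sgS sgSi (iter (2 * a) sgS) MbF MbV (map_mx iota (MzF p x)) (map_mx iota (MzV p sgi x)) (mx2 (iota z) 0 0 (iota (sg z))).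
Proof.
move=> [zr xr nx]; have ux := unity_root_unit predq_gt0 xr.
have [T uT hT] : exists2 T, T \is a GRing.unit & sgS (sgS T) = T * iota x.
  apply: (sigma2_twist_root pp hS hpiS flS q_ndvd).
  by rewrite -rmorphXn xr rmorph1.
have frT : iter (2 * a) sgS T = T * iota z.
  have := iter2_norm_cocycle a (_ : sgS (sgS T) * 1 = T * iota x).
  rewrite hT mulr1 => /(_ erefl); rewrite big1 ?mulr1 => [-> | i _]; last exact: iter_rmorph1.
  by rewrite -nx rmorph_prod; congr (_ * _); apply: eq_bigr => i _; rewrite iter_sgS_iota.
have hB (X Y : 'M[R]_2) : X *m map_mx sg Y = (p%:R)%:M ->
    map_mx iota X *m map_mx sgS (map_mx iota Y) = (p%:R)%:M.
  by move=> h; rewrite map_mx_sgS_iota -map_mxM h map_scalar_mx rmorph_nat.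
have hT' : T * p%:R = iota x^-1 * p%:R * sgS (sgS T).
  rewrite hT [RHS](_ : _ = T * p%:R * (iota x^-1 * iota x)); last by ring.
  by rewrite -rmorphM mulVr // rmorph1 mulr1.
have b'0 : iota x^-1 * p%:R != 0 by rewrite mulf_neq0 ?(pR_neq0 hS) // unit_neq0 // rmorph_unit ?unitrV.
have MzFE : map_mx iota (MzF p x) = mx2 0 (iota x^-1 * p%:R) 1 0.
  by rewrite map_mx2 rmorph0 rmorph1 rmorphM rmorph_nat.
have := diag_dmod_iso_mx sgS1 sgS2 uT b'0 _ _ hT'.
rewrite -MbFE -MzFE => /(_ _ _ _ (hB _ _ MF_MV) (hB _ _ (MzF_MzV ux))) [PQ QP hF hV].
exists (mx2 T 0 0 (sgS T)), (mx2 T^-1 0 0 (sgS T)^-1); split=> //.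
rewrite map_mx2 frT iter_rmorph0 -iterSr iterS frT rmorphM /= sgS_iota mulmx2.
by rewrite !(mul0r, mulr0, add0r, addr0) !mulKr ?rmorph_unit.
Qed.

Lemma pdvd_iota n (r : R) : pdvd p n r -> pdvd p n (iota r).
Proof. by move=> [v ->]; exists (iota v); rewrite rmorphM rmorphXn rmorph_nat. Qed.

Lemma residue_iota0 (r : R) : piS (iota r) = 0 <-> piR r = 0.
Proof.
split=> [h | /(residue0P hpiR) h]; last by apply/(residue0P hpiS); apply: pdvd_iota.
apply/eqP; apply: contraLR (introT eqP h) => hr.
by rewrite -unitfE !rmorph_unit // (residue_neq0_unit hR hpiR hr).
Qed.

Lemma residue_iota_eq (r1 r2 : R) : piS (iota r1) = piS (iota r2) <-> piR r1 = piR r2.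
Proof.
split=> h; apply/eqP; rewrite -subr_eq0 -!rmorphB; apply/eqP;
  [apply/residue_iota0 | apply/residue_iota0]; by rewrite !rmorphB /= h subrr.
Qed.

Lemma iota_inj : injective iota.
Proof.
move=> r1 r2 h; apply/eqP; rewrite -subr_eq0; apply/eqP.
have : iota (r1 - r2) = 0 by rewrite rmorphB h subrr.
move: (r1 - r2) => r h0; apply: (pdvd_sep hR) => n; rewrite subr0.
elim: n => [|n [w hw]]; first exact: pdvd0.
have /(congr1 piS) : iota w = 0.
  move: h0; rewrite hw rmorphM rmorphXn rmorph_nat => /eqP; rewrite mulf_eq0.
  by rewrite (negbTE (pRX_neq0 hS n)) => /eqP.
rewrite rmorph0 => /residue_iota0 /(residue0P hpiR) [v hv].
by exists v; rewrite hw hv mulrA -exprSr.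
Qed.

(* iota(R) mod p already supplies q distinct roots of X^q - X. *)
Lemma residue_fixed_in_image (y : L) : y ^+ q = y -> exists r : R, piS (iota r) = y.
Proof.
move=> yq; have [lift liftE] : exists lift : K -> R, forall k, piR (lift k) = k.
  have surjR k : exists x : R, piR x == k.
    by case: hpiR => surj _; have [x hx] := surj k; exists x; rewrite hx.
  by exists (fun k => xchoose (surjR k)) => k; apply/eqP; exact: xchooseP (surjR k).
pose jf k := piS (iota (lift k)).
case hin: (y \in [seq jf k | k <- enum K]).
  by move/mapP: hin => [k _ ->]; exists (lift k).
pose P : {poly L} := 'X^q - 'X.
have q1 : (1 < q)%N by rewrite -{1}(expn0 p) ltn_exp2l ?prime_gt1 ?a2_gt0.
have szP : size P = q.+1 by rewrite size_polyDl size_polyXn // size_polyN size_polyX.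
have P0 : P != 0 by rewrite -size_poly_eq0 szP.
have rootP (t : L) : t ^+ q = t -> root P t by move=> h; rewrite /root !hornerE h subrr.
have hall : all (root P) (y :: [seq jf k | k <- enum K]).
  rewrite /= rootP //=; apply/allP => t /mapP [k _ ->]; apply: rootP.
  by rewrite /jf -!rmorphXn; apply/residue_iota_eq; rewrite rmorphXn liftE residue_q.
have hu : uniq (y :: [seq jf k | k <- enum K]).
  rewrite /= hin map_inj_uniq ?enum_uniq // => k1 k2 /residue_iota_eq.
  by rewrite !liftE.
have := max_poly_roots P0 hall hu.
by rewrite /= szP size_map -cardE cardK ltnn.
Qed.

Lemma descent_step (x : S) n (r : R) : iter (2 * a) sgS x = x ->
  iter (2 * a) sg r = r -> pdvd p n (x - iota r) ->
  exists r', [/\ iter (2 * a) sg r' = r', pdvd p n (r' - r) & pdvd p n.+1 (x - iota r')].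
Proof.
move=> fx fr [y hy].
have fy : iter (2 * a) sgS y = y.
  have e : iter (2 * a) sgS (p%:R ^+ n * y) = p%:R ^+ n * y.
    by rewrite -hy iter_rmorphB fx iter_sgS_iota fr.
  by rewrite iter_rmorphM iter_rmorphXn iter_rmorph_nat in e; apply: (mulfI (pRX_neq0 hS n)) e.
have yq : piS y ^+ q = piS y by rewrite -(frob_lift_iter _ _ flS) fy.
have [r0 hr0] := residue_fixed_in_image yq.
have [T [Tq piT]] := teichmuller_lift pp hR hpiR a2_gt0 (residue_q (piR r0)).
exists (r + p%:R ^+ n * T); split.
- by rewrite iter_rmorphD iter_rmorphM iter_rmorphXn iter_rmorph_nat fr (unity_root_fixed Tq).
- by rewrite addrC addKr; apply: pdvd_pX.
have -> : x - iota (r + p%:R ^+ n * T) = p%:R ^+ n * (y - iota T).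
  by rewrite rmorphD rmorphM rmorphXn rmorph_nat opprD addrA hy mulrBr.
rewrite -addn1; apply: pdvd_pXM; apply/(residue_eqP hpiS).
by rewrite -hr0; apply/residue_iota_eq.
Qed.

Lemma fixed_descends (x : S) : iter (2 * a) sgS x = x -> exists r, x = iota r.
Proof.
move=> fx; pose P n r := iter (2 * a) sg r = r /\ pdvd p n (x - iota r).
have st n r : P n r -> {r' | P n.+1 r' /\ pdvd p n (r' - r)}.
  move=> [h1 h2]; apply: constructive_indefinite_description.
  by have [r' [e1 e2 e3]] := descent_step fx h1 h2; exists r'.
have h0 : P 0%N 0 by split; [apply: iter_rmorph0 | apply: pdvd0].
pose sq := nat_rect (fun n => {r | P n r}) (exist _ 0 h0)
  (fun n s => exist _ (sval (st n (sval s) (svalP s))) (proj1 (svalP (st n (sval s) (svalP s))))).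
have [r hr] : exists r, forall n, pdvd p n (r - sval (sq n)).
  by apply: (pdvd_limit hR) => n; apply: (proj2 (svalP (st n (sval (sq n)) (svalP (sq n))))).
exists r; apply: (pdvd_sep hS) => n.
have -> : x - iota r = (x - iota (sval (sq n))) - iota (r - sval (sq n)).
  by rewrite rmorphB opprB addrA subrK.
by apply: pdvdB; [apply: (proj2 (svalP (sq n))) | apply: pdvd_iota].
Qed.

Lemma mx_fixed_descends m k (X : 'M[S]_(m, k)) : map_mx (iter (2 * a) sgS) X = X ->
  exists X0 : 'M[R]_(m, k), X = map_mx iota X0.
Proof.
move=> /matrixP hX.
have h i j : exists r, X i j = iota r by apply: fixed_descends; have := hX i j; rewrite mxE.
exists (\matrix_(i, j) sval (constructive_indefinite_description _ (h i j))).
by apply/matrixP => i j; rewrite !mxE; exact: svalP (constructive_indefinite_description _ (h i j)).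
Qed.

Lemma map_iota_inj m k : injective (@map_mx _ _ iota m k).
Proof.
by move=> X Y /matrixP h; apply/matrixP => i j; have := h i j; rewrite !mxE; apply: iota_inj.
Qed.

Definition commF (X : 'M[S]_2) := X *m MbF = MbF *m map_mx sgS X.

Lemma commF_form (X : 'M[S]_2) : commF X ->
  [/\ X i0 i1 = p%:R * sgS (X i1 i0), X i1 i1 = sgS (X i0 i0),
      sgS (sgS (X i0 i0)) = X i0 i0 & sgS (sgS (X i1 i0)) = X i1 i0].
Proof.
rewrite /commF MbFE (mx2_eta X) map_mx2 !mulmx2 !mx2E => /mx2_inj [e1 e2 e3 e4].
rewrite !(mul0r, mulr0, add0r, addr0, mul1r, mulr1) in e1 e2 e3 e4.
have pS0 := pR_neq0 hS.
have e2' : X i0 i0 = sgS (X i1 i1) by apply: (mulIf pS0); rewrite e2 mulrC.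
split=> //; first by rewrite -e3 -e2'.
by apply: (mulIf pS0); rewrite e4 e1 rmorphM rmorph_nat mulrC.
Qed.

Lemma commF_pdvd (X : 'M[S]_2) : commF X -> pdvd_mx2 p 0 1 0 0 X.
Proof.
move=> /commF_form [e1 _ _ _]; split; try apply: pdvd0.
by rewrite e1; exists (sgS (X i1 i0)); rewrite expr1.
Qed.

Lemma commF_mul (X Y : 'M[S]_2) : commF X -> commF Y -> commF (X *m Y).
Proof. by rewrite /commF => hX hY; rewrite -mulmxA hY !mulmxA hX map_mxM mulmxA. Qed.

Lemma commF_exp (X : 'M[S]_2) j : commF X -> commF (X ^+ j).
Proof.
move=> hX; elim: j => [|j IH]; first by rewrite /commF map_mx1 mulmx1 mul1mx.
by rewrite exprS -mulmxE; apply: commF_mul.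
Qed.

Lemma commF_sum n (F : 'I_n -> 'M[S]_2) : (forall i, commF (F i)) -> commF (\sum_(i < n) F i).
Proof.
move=> h; elim/big_ind: _ => //; first by rewrite /commF mul0mx map_mx0 mulmx0.
by move=> X Y hX hY; rewrite /commF mulmxDl hX hY map_mxD mulmxDr.
Qed.

Lemma commF_diag (c : S) : sgS (sgS c) = c -> commF (mx2 c 0 0 (sgS c)).
Proof.
move=> hc; rewrite /commF MbFE map_mx2 !mulmx2 rmorph0 hc.
by rewrite !(mul0r, mulr0, add0r, addr0, mul1r, mulr1) mulrC.
Qed.

Lemma commF_fixed (X : 'M[S]_2) : commF X -> map_mx (iter (2 * a) sgS) X = X.
Proof.
move=> hX; have [e1 e2 e3 e4] := commF_form hX.
have fix2 (e : S) : sgS (sgS e) = e -> iter (2 * a) sgS e = e.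
  by move=> h; elim: (a) => [|j IH] //; rewrite mulnS /= IH h.
apply/matrixP => i j; rewrite mxE; apply: fix2.
case: (ord2P i) => ->; case: (ord2P j) => -> //.
- by rewrite e1 !rmorphM !rmorph_nat e4.
- by rewrite e2 e3.
Qed.

Lemma commF_order_coprime (u : 'M[S]_2) k : (4 < p)%N -> commF u -> (0 < k)%N ->
  u ^+ k = 1 -> exists k', [/\ (0 < k')%N, ~~ (p %| k')%N & u ^+ k' = 1].
Proof.
move=> p4 hu k0 uk; have [k' ck' hk] := pfactor_coprime pp k0.
exists k'; split; first by move: k0; rewrite hk muln_gt0 => /andP [].
  by rewrite -prime_coprime.
move: uk; rewrite hk.
elim: (logn p k) => [|e IH]; first by rewrite expn0 muln1.
rewrite expnSr mulnA exprM => h; apply: IH.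
by apply: (pdvd_mx2_p_torsion pp hS hpiS p4) => //; apply/commF_pdvd/commF_exp.
Qed.

Lemma commF_residue_unity_root (u : 'M[S]_2) k : commF u -> (0 < k)%N -> u ^+ k = 1 ->
  piS (u i0 i0) ^+ (p ^ 2).-1 = 1.
Proof.
move=> hu k0 uk; have [_ _ hu00 _] := commF_form hu.
have [_ e _] := pdvd_mx2_residueX hpiS k (commF_pdvd hu).
rewrite uk mx2_1 mx2E rmorph1 in e.
apply: expr_pred_fixed; first by rewrite expn_gt0 prime_gt0.
  by apply: contra_eq_neq e => ->; rewrite expr0n eqn0Ngt k0 oner_neq0.
by rewrite -(frob_lift_iter 2 _ flS) /= hu00.
Qed.

Lemma exists_adm_residue (y : L) : y ^+ (p ^ 2).-1 = 1 ->
  exists z xi, admissible z xi /\ piS (iota z) = y.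
Proof.
move=> yp; have yq : y ^+ q = y.
  by rewrite -(prednK q_gt0) exprS -predXp2_norm_exp // exprM yp expr1n mulr1.
have [r0 hr0] := residue_fixed_in_image yq.
have r0p : piR r0 ^+ (p ^ 2).-1 = 1.
  by rewrite -rmorphXn -(rmorph1 piR); apply/residue_iota_eq; rewrite !rmorphXn !rmorph1 hr0 yp.
have nm : (nexp * (p ^ 2).-1)%N = #|K|.-1 by rewrite mulnC predXp2_norm_exp // cardK.
have [xb hxb] := finField_unity_root_expP nm r0p.
have xb0 : xb != 0.
  apply: contra_eq_neq r0p => r00; rewrite -hxb r00 expr0n eqn0Ngt norm_exp_gt0 /=.
  by rewrite expr0n eqn0Ngt predp2_gt0 eq_sym oner_neq0.
have [xi [xiq _ pixi]] := teichmuller_q xb0.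
have zE := norm_unity_root xiq.
exists (\prod_(i < a) iter (2 * i) sg xi), xi; split.
  by split=> //; rewrite zE -exprM mulnC predXp2_norm_exp.
by rewrite -hr0; apply/residue_iota_eq; rewrite zE rmorphXn pixi hxb.
Qed.

(* Averaging: g = sum_j u^j D^-j intertwines u and D, and is invertible because its
   diagonal residues are both m, a unit in characteristic p. *)
Lemma commF_conj (u D : 'M[S]_2) m : commF u -> commF D -> (0 < m)%N -> ~~ (p %| m)%N ->
  u ^+ m = 1 -> D ^+ m = 1 -> piS (u i0 i0) = piS (D i0 i0) ->
  exists g, [/\ commF g, g \in unitmx & u *m g = g *m D].
Proof.
move=> hu hD m0 pm um Dm uD.
pose f j := u ^+ j * D ^+ (m.-1 * j); pose g := \sum_(j < m) f j.
have fF j : commF (f j) by rewrite /f -mulmxE; apply/commF_mul; apply: commF_exp.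
have gF : commF g by apply: commF_sum.
have ug : u * g = g * D.
  have shift : \sum_(j < m) f j.+1 = g.
    apply: (addrI (f 0%N)); rewrite /g -(big_ord_recl m f) big_ord_recr /= addrC.
    by rewrite /f um muln0 !expr0 mulnC exprM Dm expr1n.
  have ugD : u * g * D ^+ m.-1 = g.
    rewrite -[RHS]shift /g mulr_sumr mulr_suml; apply: eq_bigr => j _.
    by rewrite /f mulrA -exprS -mulrA -exprD mulnS addnC.
  by rewrite -{2}ugD -mulrA -exprSr prednK // Dm mulr1.
pose pia := piS (u i0 i0).
have root1 (c : L) j : c ^+ m = 1 -> c ^+ j * c ^+ (m.-1 * j) = 1.
  by move=> cm; rewrite -exprD -mulSn prednK // exprM cm expr1n.
have [_ piam _] := pdvd_mx2_residueX hpiS m (commF_pdvd hu).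
rewrite um mx2_1 mx2E rmorph1 in piam.
have res11 (X : 'M[S]_2) : commF X -> piS (X i1 i1) = piS (X i0 i0) ^+ p.
  by case/commF_form=> _ -> _ _; rewrite flS.
have pf j : piS (f j i0 i0) = 1 /\ piS (f j i1 i1) = 1.
  have [hu1 eu0 eu1] := pdvd_mx2_residueX hpiS j (commF_pdvd hu).
  have [hD1 eD0 eD1] := pdvd_mx2_residueX hpiS (m.-1 * j) (commF_pdvd hD).
  have [_ e0 e1] := pdvd_mx2_residueM hpiS hu1 hD1.
  rewrite /f -mulmxE e0 e1 eu0 eu1 eD0 eD1 !res11 // -uD; split; apply: root1 => //.
  by rewrite exprAC -piam expr1n.
have pg (i : 'I_2) : i = i0 \/ i = i1 -> piS (g i i) = m%:R.
  move=> hi; rewrite /g summxE rmorph_sum (eq_bigr (fun _ => 1)) ?sumr_const ?card_ord //.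
  by move=> j _; case: hi => ->; case: (pf j).
exists g; split=> //.
rewrite unitmxE; apply: (residue_neq0_unit hS hpiS).
have [_ g01 _ _] := commF_pdvd gF.
rewrite {1}(mx2_eta g) det_mx2 rmorphB !rmorphM /= !pg ?(residue_pdvd hpiS _ g01); auto.
by rewrite mul0r subr0 mulf_neq0 // -(dvdn_pcharf (pchar_residue pp hpiS)).
Qed.

(* phi g psi' is fixed by the q-Frobenius, hence descends to R. *)
Lemma twist_conj_iso m n k (MF0 MV0 : 'M[S]_k) (A B : 'M[R]_m) (A' B' : 'M[R]_n)
    (u u' g : 'M[S]_k) :
  A *m map_mx sg B = (p%:R)%:M -> A' *m map_mx sg B' = (p%:R)%:M ->
  twist sgS sgSi (iter (2 * a) sgS) MF0 MV0 (map_mx iota A) (map_mx iota B) u ->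
  twist sgS sgSi (iter (2 * a) sgS) MF0 MV0 (map_mx iota A') (map_mx iota B') u' ->
  g \in unitmx -> g *m MF0 = MF0 *m map_mx sgS g ->
  map_mx (iter (2 * a) sgS) g = g -> u *m g = g *m u' ->
  dmod_iso sg sgi A' B' A B.
Proof.
move=> hA hA' [phi [psi [pq qp phF _ fru]]] [phx [psx [pq' qp' phF' _ fru']]] ug gF frg ugu.
have [frphi _] := map_mx_iter_twist pq qp fru.
have [_ frpsx] := map_mx_iter_twist pq' qp' fru'.
have gig : invmx g *m map_mx (iter (2 * a) sgS) g = 1%:M by rewrite frg mulVmx.
have [_ frgi] := map_mx_iter_twist (mulmxV ug) (mulVmx ug) gig.
rewrite mul1mx in frgi.
have ugi : u' *m invmx g = invmx g *m u.
  by rewrite -[LHS]mul1mx -(mulVmx ug) -mulmxA (mulmxA g) -ugu -mulmxA mulmxV // mulmx1.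
set P := phi *m g *m psx; set Q := phx *m invmx g *m psi.
have [P0 eP] : exists P0, P = map_mx iota P0.
  apply: mx_fixed_descends.
  by rewrite /P !map_mx_iterM frphi frg -(mulmxA phi u g) ugu -!mulmxA frpsx.
have [Q0 eQ] : exists Q0, Q = map_mx iota Q0.
  apply: mx_fixed_descends; rewrite /Q !map_mx_iterM frgi.
  have [frphx _] := map_mx_iter_twist pq' qp' fru'.
  have [_ frpsi] := map_mx_iter_twist pq qp fru.
  by rewrite frphx -(mulmxA phx u' (invmx g)) ugi -!mulmxA frpsi.
have PF : P0 *m A' = A *m map_mx sg P0.
  apply: map_iota_inj; rewrite !map_mxM -map_mx_sgS_iota -eP /P -mulmxA.
  rewrite (intertwine_inv pq' qp' phF') mulmxA -(mulmxA phi) gF !mulmxA phF.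
  by rewrite -!mulmxA -!map_mxM.
have dA : \det A != 0.
  apply/eqP => /(congr1 (fun d => d * \det (map_mx sg B))); rewrite mul0r -det_mulmx hA.
  by rewrite det_scalar => /eqP; rewrite expf_eq0 (negbTE (pR_neq0 hR)) andbF.
exists P0, Q0; split=> //.
- by apply: map_iota_inj; rewrite map_mxM -eP -eQ /P /Q -!mulmxA (mulmxA psx) qp' mul1mx
    (mulmxA g) mulmxV // mul1mx pq map_mx1.
- by apply: map_iota_inj; rewrite map_mxM -eP -eQ /P /Q -!mulmxA (mulmxA psi) qp mul1mx
    (mulmxA (invmx g)) mulVmx // mul1mx pq' map_mx1.
by apply: (intertwine_V_of_F sg1 sg2 hA' hA dA PF).
Qed.

Lemma twist_iso_Mz : (3 < p)%N -> forall (n : nat) (A B : 'M[R]_n) (u : 'M[S]_2),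
  dieud p sg sgi A B -> dmod_aut_fin sgS sgSi MbF MbV u ->
  twist sgS sgSi (iter (2 * a) sgS) MbF MbV (map_mx iota A) (map_mx iota B) u ->
  exists z x, admissible z x /\ dmod_iso sg sgi (MzF p x) (MzV p sgi x) A B.
Proof.
move=> p3 n A B u hAB [_ hu _ [k [k0 uk]]] tw.
have p4 : (4 < p)%N by move: p3 pp; rewrite leq_eqVlt => /orP [/eqP <- //|].
have [k' [k'0 pk' uk']] := commF_order_coprime p4 hu k0 uk.
have [z [xi [hadm piz]]] := exists_adm_residue (commF_residue_unity_root hu k0 uk).
have [zp xiq _] := hadm.
have ssz : sg (sg z) = z.
  rewrite -[sg (sg z)]/(iter 2 sg z) (unity_root_iter 2 p2_ndvd zp).
  by rewrite -[(p ^ 2)%N]prednK ?expn_gt0 ?prime_gt0 // exprS zp mulr1.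
set D := mx2 (iota z) 0 0 (iota (sg z)).
have hD : commF D by rewrite /D -sgS_iota; apply: commF_diag; rewrite !sgS_iota ssz.
set m := (k' * (p ^ 2).-1)%N.
have Dm : D ^+ m = 1.
  have szp : sg z ^+ (p ^ 2).-1 = 1 by rewrite -rmorphXn zp rmorph1.
  by rewrite /D mx2_diagX mx2_1 /m mulnC !exprM -!(rmorphXn iota) zp szp expr1n rmorph1.
have [g [gF ug ugD]] : exists g, [/\ commF g, g \in unitmx & u *m g = g *m D].
  apply: (commF_conj hu hD _ _ _ Dm).
  - by rewrite muln_gt0 k'0 predp2_gt0.
  - by rewrite Euclid_dvdM // negb_or pk' p2_ndvd.
  - by rewrite /m exprM uk' expr1n.
  by rewrite /D mx2E piz.
exists z, xi; split=> //; case: hAB => hAB _.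
have hxi := MzF_MzV (unity_root_unit predq_gt0 xiq).
exact: (twist_conj_iso hAB hxi tw (Mz_twist hadm) ug gF (commF_fixed gF) ugD).
Qed.

End DieudonneTwists.

Unset Implicit Arguments.

Theorem proposition7p2 (p a : nat)
  (R S : idomainType) (K : finFieldType) (L : closedFieldType)
  (piR : {rmorphism R -> K}) (piS : {rmorphism S -> L})
  (sg : {rmorphism R -> R}) (sgi : R -> R)
  (sgS : {rmorphism S -> S}) (sgSi : S -> S)
  (iota : {rmorphism R -> S}) :
  prime p -> (0 < a)%N -> #|K| = (p ^ (2 * a))%N ->
  strict_p_ring p R -> residue_map p piR ->
  strict_p_ring p S -> residue_map p piS ->
  cancel sg sgi -> cancel sgi sg -> frob_lift p piR sg ->
  cancel sgS sgSi -> cancel sgSi sgS -> frob_lift p piS sgS ->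
  (forall x : R, sgS (iota x) = iota (sg x)) ->
  let q := (p ^ (2 * a))%N in
  let admissible (zeta xi : R) :=
    [/\ zeta ^+ (p ^ 2).-1 = 1, xi ^+ q.-1 = 1
      & \prod_(i < a) iter (2 * i) sg xi = zeta] in
  let Mb_F := map_mx iota (MF p R) in
  let Mb_V := map_mx iota (MV p R) in
  let frq := iter (2 * a) sgS in
  (* (a) pairwise non-isomorphic *)
  (forall z1 x1 z2 x2, admissible z1 x1 -> admissible z2 x2 -> z1 != z2 ->
     ~ dmod_iso sg sgi (MzF p x1) (MzV p sgi x1) (MzF p x2) (MzV p sgi x2))
  (* isomorphism class independent of the choice of xi *)
  /\ (forall z x1 x2, admissible z x1 -> admissible z x2 ->
     dmod_iso sg sgi (MzF p x1) (MzV p sgi x1) (MzF p x2) (MzV p sgi x2))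
  (* (b) M_zeta is the twist of M by x |-> zeta x, y |-> zeta^sigma y *)
  /\ (forall z x, admissible z x ->
     twist sgS sgSi frq Mb_F Mb_V
       (map_mx iota (MzF p x)) (map_mx iota (MzV p sgi x))
       (mx2 (iota z) 0 0 (iota (sg z))))
  (* (c) for p > 3 every twist is some M_zeta *)
  /\ ((3 < p)%N ->
     forall (n : nat) (A B : 'M[R]_n) (u : 'M[S]_2),
       dieud p sg sgi A B ->
       dmod_aut_fin sgS sgSi Mb_F Mb_V u ->
       twist sgS sgSi frq Mb_F Mb_V (map_mx iota A) (map_mx iota B) u ->
       exists z x, admissible z x /\
         dmod_iso sg sgi (MzF p x) (MzV p sgi x) A B).

Proof.
move=> pp a0 cK hR hpiR hS hpiS sg1 sg2 flR sgS1 sgS2 flS sgS_iota q adm MbF MbV frq.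
split; [|split; [|split]].
- exact: (Mz_not_iso pp a0 cK hR hpiR flR).
- exact: (Mz_iso_indep pp a0 cK hR hpiR sg1 sg2 flR).
- exact: (Mz_twist pp a0 hS hpiS sg2 sgS1 sgS2 flS sgS_iota).
- exact: (twist_iso_Mz pp a0 cK hR hpiR hS hpiS sg1 sg2 flR sgS1 sgS2 flS sgS_iota).
Qed.
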